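(* Let $h\in\mathbb{Z}$, $k\ge1$ and $n\ge0$. The number of partitions $\lambda\vdash n$ having an $h$-fixed hook arising from a part of size $k$ equals the number of partitions $\mu$ of $n+\binom{k}{2}-(h+1)$ such that the minimal excludant of $\mu$ is $k$ and $$h+1+\#\{\text{parts of }\mu\text{ larger than }k\}>\#\{\text{parts of }\mu\text{ smaller than }k\}.$$
   Context: A partition $\lambda=(\lambda_1\ge\cdots\ge\lambda_t>0)$ of $n$ has first-column hook lengths $h_{s,1}(\lambda)=\lambda_s+(t-s)$. An $h$-fixed hook arising from a part of size $k$ is an index $s$ with $h_{s,1}(\lambda)=s+h$ and $\lambda_s=k$. The minimal excludant (mex) of a partition is the smallest positive integer that does not occur as a part. Parts are counted with multiplicity. Partitions of negative integers do not exist (count $0$). *)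

From mathcomp Require Import all_boot all_order all_algebra.
Set Implicit Arguments. Unset Strict Implicit. Unset Printing Implicit Defensive.
Import Order.TTheory GRing.Theory Num.Theory.

Definition is_partition (n : nat) (l : seq nat) : bool :=
  [&& sorted geq l, all (fun x => 0 < x) l & sumn l == n].

(* All lists of length <= len whose entries lie in [1, b]; a finite (duplicate-free)
   superset of the partitions of n when len = b = n. *)
Fixpoint bounded_seqs (b len : nat) : seq (seq nat) :=
  match len with
  | 0 => [:: [::]]
  | len'.+1 => [::] :: [seq x :: s | x <- iota 1 b, s <- bounded_seqs b len']
  end.

(* The partitions of n (every partition of n has at most n parts, each <= n). *)
Definition partitions (n : nat) : seq (seq nat) :=
  [seq l <- bounded_seqs n n | is_partition n l].

Definition npart (n : nat) (P : pred (seq nat)) : nat := count P (partitions n).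

Definition npartZ (N : int) (P : pred (seq nat)) : nat :=
  if (N < 0)%R then 0 else npart `|N|%N P.

(* lambda = (lambda_1 >= ... >= lambda_t) has an h-fixed hook arising from a part
   of size k: some index s (1 <= s <= t) with lambda_s + (t - s) = s + h and
   lambda_s = k.  Here lambda_s = nth 0 l (s-1). *)
Definition has_hfixed_hook (h : int) (k : nat) (l : seq nat) : bool :=
  has (fun s => (nth 0 l s.-1 == k) &&
                (Posz (nth 0 l s.-1 + (size l - s)) == (Posz s + h)%R))
      (iota 1 (size l)).

(* minimal excludant: smallest positive integer not occurring as a part
   (it lies in [1, size l + 1]). *)
Definition mex (l : seq nat) : nat :=
  head 0 [seq m <- iota 1 (size l).+1 | m \notin l].

Definition nlarger (k : nat) (l : seq nat) : nat := count (fun x => k < x) l.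
Definition nsmaller (k : nat) (l : seq nat) : nat := count (fun x => x < k) l.

(* Cut lambda at its h-fixed hook: lambda = top ++ k :: bot with
   k + |bot| = |top| + 1 + h.  Adding 1 to each part of top, subtracting 1
   from each part of bot (dropping the zeros) and replacing the part k by
   1, 2, ..., k-1 gives a partition mu of n + C(k,2) - (h+1).  Its parts
   larger than k come from top, its parts smaller than k are 1, ..., k-1
   together with the shrunken parts of bot; hence mex mu = k, and mu has
   |top| parts larger than k and at most k - 1 + |bot| = |top| + h parts
   smaller than k.  Conversely, the number of parts 1 lost from bot is
   forced by |bot| = |top| + 1 + h - k, so the map is a bijection. *)

From mathcomp Require Import all_boot all_order all_algebra zify.
Import Order.TTheory GRing.Theory Num.Theory.

Set Implicit Arguments.
Unset Strict Implicit.
Unset Printing Implicit Defensive.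

Lemma geq_trans : transitive geq. Proof. exact: rev_trans leq_trans. Qed.

Lemma geq_total : total geq. Proof. by move=> x y; apply: leq_total. Qed.

Lemma sorted_geq_eq s1 s2 :
  sorted geq s1 -> sorted geq s2 -> perm_eq s1 s2 -> s1 = s2.
Proof. by apply: (sorted_eq geq_trans); move=> x y /anti_leq ->. Qed.

Lemma sorted_geq_cat_mid A x B :
  sorted geq (A ++ x :: B) =
  [&& sorted geq A, sorted geq B, all (leq x) A & all (geq x) B].
Proof.
rewrite !(sorted_pairwise geq_trans) pairwise_cat /= allrel_consr.
apply/idP/and4P => [/and4P[/andP[Ax _] pA xB pB] // | [pA pB Ax xB]].
apply/and4P; split=> //; rewrite Ax /=; apply/allrelP => a b aA bB.
exact: leq_trans (allP xB b bB) (allP Ax a aA).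
Qed.

Lemma filter_none (T : Type) (p : pred T) s : all (predC p) s -> filter p s = [::].
Proof. by elim: s => //= x s IH /andP[/negbTE-> /IH]. Qed.

Lemma map_succn_predn s : all (fun x => 0 < x) s -> map succn (map predn s) = s.
Proof. by elim: s => //= x s IH /andP[x_gt0 /IH ->]; rewrite prednK. Qed.

Lemma perm_pad_ones s : all (fun x => 0 < x) s ->
  perm_eq s (filter (fun x => 1 < x) s ++ nseq (size s - count (fun x => 1 < x) s) 1).
Proof.
move=> s_pos; rewrite -(perm_filterC (fun x => 1 < x) s) perm_cat2l.
have /all_pred1P -> : all (pred1 1) (filter (predC (fun x => 1 < x)) s).
  by rewrite all_filter; apply: (sub_all _ s_pos) => x /=; apply/implyP; lia.
by rewrite size_filter -(count_predC (fun x => 1 < x) s) addKn.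
Qed.

Lemma uniq_sub_perm_cat (T : eqType) (r s : seq T) :
  uniq r -> {subset r <= s} -> exists s', perm_eq s (r ++ s').
Proof.
move=> r_uniq r_s.
have [r' r's perm_r] : exists2 r', subseq r' s & perm_eq r r'.
  apply/(iffLR (count_subseqP r s)) => x; rewrite count_uniq_mem //.
  by case xr: (x \in r) => //; rewrite -has_count has_pred1 r_s.
have [s' perm_s] := perm_to_subseq r's.
by exists s'; rewrite (permPl perm_s) perm_cat2r perm_sym.
Qed.

Lemma perm_filter_gt_lt k mu : k \notin mu ->
  perm_eq mu (filter (fun x => k < x) mu ++ filter (fun x => x < k) mu).
Proof.
move=> kNmu.
have -> : filter (fun x => x < k) mu = filter (predC (fun x => k < x)) mu.
  apply: eq_in_filter => x x_mu /=; have : x != k by apply: contraNneq kNmu => <-.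
  by lia.
by rewrite perm_sym perm_filterC.
Qed.

Lemma count_eq_bij (T1 T2 : eqType) (A : seq T1) (B : seq T2)
    (P : pred T1) (Q : pred T2) (f : T1 -> T2) :
  uniq A -> uniq B ->
  {in [pred x | (x \in A) && P x] &, injective f} ->
  (forall x, x \in A -> P x -> (f x \in B) && Q (f x)) ->
  (forall y, y \in B -> Q y -> exists2 x, (x \in A) && P x & f x = y) ->
  count P A = count Q B.
Proof.
move=> A_uniq B_uniq f_inj f_into f_onto.
rewrite -!size_filter -(size_map f); apply: perm_size; apply: uniq_perm.
- rewrite map_inj_in_uniq ?filter_uniq // => x y.
  by rewrite !mem_filter => xPA yPA; apply: f_inj; rewrite inE andbC.
- exact: filter_uniq.
move=> y; rewrite mem_filter; apply/mapP/andP => [[x] | [Qy /f_onto /(_ Qy) [x xAP <-]]].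
  by rewrite mem_filter => /andP[Px xA] ->; apply/andP; rewrite andbC f_into.
by exists x; rewrite // mem_filter andbC.
Qed.

Lemma size_le_sumn s : all (fun x => 0 < x) s -> size s <= sumn s.
Proof. by elim: s => //= x s IH /andP[x_gt0 /IH]; lia. Qed.

Lemma mem_le_sumn s x : x \in s -> x <= sumn s.
Proof. by elim: s => //= y s IH; rewrite inE => /predU1P[->|/IH]; lia. Qed.

Lemma sumn_iota1 k : sumn (iota 1 k.-1) = 'C(k, 2).
Proof. by case: k => [|k] //; rewrite -bin2_sum /index_iota subn0 -sumnE. Qed.

Lemma sumn_map_succn s : sumn (map succn s) = sumn s + size s.
Proof. by elim: s => //= x s ->; lia. Qed.

Lemma sumn_map_predn_gt1 s : all (fun x => 0 < x) s ->
  sumn (map predn (filter (fun x => 1 < x) s)) + size s = sumn s.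
Proof. by elim: s => //= x s IH /andP[x_gt0 /IH]; case: ifP => /=; lia. Qed.

Lemma mem_bounded_seqs b len l :
  (l \in bounded_seqs b len) = (size l <= len) && all (fun x => 0 < x <= b) l.
Proof.
elim: len l => [|len IH] [|x l] //=; rewrite inE /=.
apply/allpairsP/idP => [[[y s] /= [+ + [-> ->]]] | /and3P[/[!ltnS] l_len x_b l_b]].
  by rewrite mem_iota IH ltnS => y_b /andP[-> ->]; rewrite andbT; lia.
by exists (x, l); rewrite mem_iota IH l_len l_b; split => //; lia.
Qed.

Lemma uniq_bounded_seqs b len : uniq (bounded_seqs b len).
Proof.
elim: len => [|len IH] //=; apply/andP; split.
  by apply/allpairsP => -[[y s] /= [_ _]].
apply: allpairs_uniq => //; first exact: iota_uniq.
by move=> [x1 s1] [x2 s2] _ _ /= [-> ->].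
Qed.

Lemma mem_partitions n l : (l \in partitions n) = is_partition n l.
Proof.
rewrite mem_filter andb_idr // => /and3P[_ l_pos /eqP <-].
rewrite mem_bounded_seqs size_le_sumn //=.
by apply/allP => x xl; rewrite (allP l_pos) ?mem_le_sumn.
Qed.

Lemma uniq_partitions n : uniq (partitions n).
Proof. exact/filter_uniq/uniq_bounded_seqs. Qed.

Lemma mexP l : [/\ 0 < mex l, mex l \notin l & forall m, 0 < m < mex l -> m \in l].
Proof.
rewrite /mex; set r := iota 1 (size l).+1.
have [m [s r_eq]] : exists m s, [seq x <- r | x \notin l] = m :: s.
  case r_eq: [seq x <- r | x \notin l] => [|m s]; last by exists m, s.
  have r_l : {subset r <= l}.
    by move=> x xr; apply: contraT => xNl; rewrite -(in_nil x) -r_eq mem_filter xNl.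
  by have := uniq_leq_size (iota_uniq _ _) r_l; rewrite size_iota ltnn.
have := mem_head m s; rewrite -r_eq mem_filter mem_iota => /andP[mNl m_bounds].
have m_min : all (fun x => m < x) s.
  apply: order_path_min ltn_trans _; rewrite -/(sorted ltn (m :: s)) -r_eq.
  by rewrite sorted_filter ?iota_ltn_sorted //; apply: ltn_trans.
rewrite r_eq /=; split => // [|x /andP[x_gt0 x_lt]]; first by lia.
have x_in : x \notin l -> x \in m :: s.
  by move=> xNl; rewrite -r_eq mem_filter xNl mem_iota; lia.
apply: contraTT x_lt => /x_in.
by rewrite inE => /predU1P[-> | /(allP m_min)]; lia.
Qed.

Lemma mex_eq l k :
  0 < k -> k \notin l -> (forall m, 0 < m < k -> m \in l) -> mex l = k.
Proof.
move=> k_gt0 kNl below_k; have [mex_gt0 mexNl below_mex] := mexP l.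
apply/eqP; case: (ltngtP (mex l) k) => [mex_lt | k_lt |] //.
  by rewrite below_k ?mex_gt0 in mexNl.
by rewrite below_mex ?k_gt0 in kNl.
Qed.

Definition hfixed_at (h : int) (k : nat) (l : seq nat) (s : nat) : bool :=
  (nth 0 l s.-1 == k) && (Posz (nth 0 l s.-1 + (size l - s)) == (Posz s + h)%R).

(* For [l = top ++ k :: bot] the part [k] has index [s = size top + 1] and
   [t - s = size bot]. *)
Definition hfixed_cut (h : int) (k : nat) (top bot : seq nat) : bool :=
  (Posz (k + size bot) == Posz (size top).+1 + h)%R.

Lemma has_hfixed_hookE h k l :
  has_hfixed_hook h k l = has (hfixed_at h k l) (iota 1 (size l)).
Proof. by []. Qed.

Lemma hfixed_at_cat h k top bot :
  hfixed_at h k (top ++ k :: bot) (size top).+1 = hfixed_cut h k top bot.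
Proof.
rewrite /hfixed_at /hfixed_cut /= nth_cat ltnn subnn eqxx size_cat /=.
by rewrite addnS subSS addKn.
Qed.

Lemma hfixed_at_uniq h k l s1 s2 : s1 <= size l -> s2 <= size l ->
  hfixed_at h k l s1 -> hfixed_at h k l s2 -> s1 = s2.
Proof. by move=> + + /andP[/eqP-> /eqP c1] /andP[/eqP-> /eqP c2]; lia. Qed.

Lemma hfixed_hookP h k l :
  reflect (exists top bot, l = top ++ k :: bot /\ hfixed_cut h k top bot)
          (has_hfixed_hook h k l).
Proof.
rewrite has_hfixed_hookE; apply: (iffP hasP) => [[s] | [top [bot [-> cut]]]].
  rewrite mem_iota => s_bounds s_hook.
  have s_lt : s.-1 < size l by lia.
  have l_eq : l = take s.-1 l ++ k :: drop s l.
    case/andP: s_hook => /eqP nth_s _.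
    by rewrite -{1}(cat_take_drop s.-1 l) (drop_nth 0 s_lt) nth_s prednK //; lia.
  exists (take s.-1 l), (drop s l); split => //.
  by rewrite -hfixed_at_cat -l_eq size_takel ?prednK //; lia.
exists (size top).+1; last by rewrite hfixed_at_cat.
by rewrite mem_iota size_cat /=; lia.
Qed.

(* [find] returns [s - 1] for the first hook index [s]. *)
Definition hook_cut (h : int) (k : nat) (l : seq nat) : seq nat * seq nat :=
  let i := find (hfixed_at h k l) (iota 1 (size l)) in (take i l, drop i.+1 l).

Lemma hook_cut_cat h k top bot :
  hfixed_cut h k top bot -> hook_cut h k (top ++ k :: bot) = (top, bot).
Proof.
move=> cut; set l := top ++ k :: bot.
have l_hook : has (hfixed_at h k l) (iota 1 (size l)).
  by rewrite -has_hfixed_hookE; apply/hfixed_hookP; exists top, bot.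
have i_lt := l_hook; rewrite has_find size_iota in i_lt.
have := nth_find 0 l_hook; rewrite nth_iota // add1n => i_hook.
have i_eq : find (hfixed_at h k l) (iota 1 (size l)) = size top.
  apply: succn_inj; apply: (hfixed_at_uniq _ _ i_hook); rewrite ?hfixed_at_cat //.
  by rewrite /l size_cat /=; lia.
by rewrite /hook_cut /= i_eq take_size_cat // /l -cat_rcons drop_size_cat ?size_rcons.
Qed.

Definition hook_shaped (k : nat) (top bot : seq nat) : bool :=
  [&& sorted geq top, sorted geq bot, all (leq k) top, all (geq k) bot
    & all (fun x => 0 < x) bot].

Lemma is_partition_cat_mid n k top bot : 0 < k ->
  is_partition n (top ++ k :: bot) =
  hook_shaped k top bot && (sumn top + k + sumn bot == n).
Proof.
move=> k_gt0; rewrite /is_partition sorted_geq_cat_mid all_cat /= k_gt0 sumn_cat /= addnA.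
rewrite /hook_shaped andbA; congr (_ && _).
have [top_ge|] := boolP (all (leq k) top); last by rewrite !andbF.
have top_pos : all (fun x => 0 < x) top.
  by apply: (sub_all _ top_ge) => x /= /(leq_trans k_gt0).
rewrite top_pos.
by case: (sorted geq top) (sorted geq bot) (all (geq k) bot) => [] [] [].
Qed.

Lemma hook_partitionP h k n l : 0 < k -> is_partition n l -> has_hfixed_hook h k l ->
  exists top bot, [/\ l = top ++ k :: bot, hook_shaped k top bot,
                      hfixed_cut h k top bot & sumn top + k + sumn bot = n].
Proof.
move=> k_gt0 + /hfixed_hookP[top [bot [l_eq cut]]].
rewrite l_eq is_partition_cat_mid // => /andP[shaped /eqP sum_n].
by exists top, bot.
Qed.

Definition mex_parts (k : nat) (top bot : seq nat) : seq nat :=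
  map succn top ++ iota 1 k.-1 ++ map predn (filter (fun x => 1 < x) bot).

Definition mex_partition (k : nat) (top bot : seq nat) : seq nat :=
  sort geq (mex_parts k top bot).

Lemma perm_mex_partition k top bot :
  perm_eq (mex_partition k top bot) (mex_parts k top bot).
Proof. exact: permEl (perm_sort _ _). Qed.

Section MexParts.

Variables (k : nat) (top bot : seq nat).

Lemma all_pos_mex_partition : all (fun x => 0 < x) (mex_partition k top bot).
Proof.
rewrite all_sort !all_cat; apply/and3P; split; apply/allP => x.
- by case/mapP=> y _ ->.
- by rewrite mem_iota; lia.
- by case/mapP=> y; rewrite mem_filter => /andP[y_gt1 _] ->; lia.
Qed.

Lemma sumn_mex_partition : all (fun x => 0 < x) bot ->
  sumn (mex_partition k top bot) + size bot =
  sumn top + size top + 'C(k, 2) + sumn bot.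
Proof.
move=> bot_pos; rewrite (perm_sumn (perm_mex_partition _ _ _)) !sumn_cat.
by rewrite sumn_map_succn sumn_iota1 -(sumn_map_predn_gt1 bot_pos); lia.
Qed.

Hypotheses (top_ge : all (leq k) top) (bot_le : all (geq k) bot).

Lemma succn_top_gt : all (fun x => k < x) (map succn top).
Proof. by rewrite all_map; apply: (sub_all _ top_ge). Qed.

Lemma predn_bot_lt : all (fun x => 0 < x < k) (map predn (filter (fun x => 1 < x) bot)).
Proof.
rewrite all_map all_filter; apply: (sub_all _ bot_le) => x /= x_le.
by apply/implyP; lia.
Qed.

Lemma filter_gt_mex_parts :
  filter (fun x => k < x) (mex_parts k top bot) = map succn top.
Proof.
have iota_le : all (predC (fun x => k < x)) (iota 1 k.-1).
  by apply/allP => x; rewrite mem_iota /=; lia.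
have predn_bot_le : all (predC (fun x => k < x)) (map predn (filter (fun x => 1 < x) bot)).
  by apply: (sub_all _ predn_bot_lt) => x /=; lia.
rewrite !filter_cat (all_filterP succn_top_gt).
by rewrite (filter_none iota_le) (filter_none predn_bot_le) /= cats0.
Qed.

Lemma filter_lt_mex_parts : filter (fun x => x < k) (mex_parts k top bot) =
  iota 1 k.-1 ++ map predn (filter (fun x => 1 < x) bot).
Proof.
rewrite !filter_cat filter_none; last by apply: (sub_all _ succn_top_gt) => x /=; lia.
rewrite (all_filterP (_ : all _ (iota 1 k.-1))); last first.
  by apply/allP => x; rewrite mem_iota; lia.
by rewrite (all_filterP (sub_all _ predn_bot_lt)) // => x /andP[].
Qed.

Lemma nlarger_mex_partition : nlarger k (mex_partition k top bot) = size top.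
Proof.
by rewrite /nlarger (permP (perm_mex_partition _ _ _)) -size_filter filter_gt_mex_parts size_map.
Qed.

Lemma nsmaller_mex_partition :
  nsmaller k (mex_partition k top bot) = k.-1 + count (fun x => 1 < x) bot.
Proof.
rewrite /nsmaller (permP (perm_mex_partition _ _ _)) -size_filter filter_lt_mex_parts.
by rewrite size_cat size_iota size_map size_filter.
Qed.

Lemma mex_mex_partition : 0 < k -> mex (mex_partition k top bot) = k.
Proof.
move=> k_gt0; apply: mex_eq => // [|m m_bounds].
  rewrite mem_sort !mem_cat mem_iota !negb_or; apply/and3P; split.
  - by apply/negP => /(allP succn_top_gt); rewrite ltnn.
  - by lia.
  by apply/negP => /(allP predn_bot_lt); lia.
by rewrite mem_sort !mem_cat mem_iota; lia.
Qed.

End MexParts.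

Definition mex_balanced (h : int) (k : nat) (mu : seq nat) : bool :=
  (mex mu == k) && (Posz (nsmaller k mu) < h + 1 + Posz (nlarger k mu))%R.

Lemma mex_balanced_mex_partition h k top bot : 0 < k ->
  hook_shaped k top bot -> hfixed_cut h k top bot ->
  mex_balanced h k (mex_partition k top bot).
Proof.
move=> k_gt0 /and5P[_ _ top_ge bot_le _] /eqP cut.
rewrite /mex_balanced mex_mex_partition // eqxx.
rewrite nsmaller_mex_partition // nlarger_mex_partition //.
by have := count_size (fun x => 1 < x) bot; lia.
Qed.

Lemma sumn_mex_partition_cut h k top bot :
  all (fun x => 0 < x) bot -> hfixed_cut h k top bot ->
  Posz (sumn (mex_partition k top bot)) =
  (Posz (sumn (top ++ k :: bot)) + Posz 'C(k, 2) - (h + 1))%R.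
Proof.
move=> bot_pos /eqP cut; have := sumn_mex_partition k top bot_pos.
by rewrite sumn_cat /=; lia.
Qed.

Lemma mex_partition_inj h k top1 bot1 top2 bot2 :
  hook_shaped k top1 bot1 -> hook_shaped k top2 bot2 ->
  hfixed_cut h k top1 bot1 -> hfixed_cut h k top2 bot2 ->
  mex_partition k top1 bot1 = mex_partition k top2 bot2 ->
  top1 = top2 /\ bot1 = bot2.
Proof.
move=> /and5P[top1_sorted bot1_sorted top1_ge bot1_le bot1_pos].
move=> /and5P[top2_sorted bot2_sorted top2_ge bot2_le bot2_pos] /eqP cut1 /eqP cut2 eq12.
have parts12 : perm_eq (mex_parts k top1 bot1) (mex_parts k top2 bot2).
  by rewrite -(permPl (perm_mex_partition _ _ _)) eq12 perm_mex_partition.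
have top12 : top1 = top2.
  apply: sorted_geq_eq top1_sorted top2_sorted _; apply: (perm_map_inj succn_inj).
  rewrite -(filter_gt_mex_parts top1_ge bot1_le) -(filter_gt_mex_parts top2_ge bot2_le).
  exact: perm_filter.
subst top2; split=> //.
have gt1_12 : perm_eq (filter (fun x => 1 < x) bot1) (filter (fun x => 1 < x) bot2).
  move: (perm_filter (fun x => x < k) parts12).
  rewrite (filter_lt_mex_parts top1_ge bot1_le) (filter_lt_mex_parts top1_ge bot2_le).
  rewrite perm_cat2l => /(perm_map succn); rewrite !map_succn_predn //.
    by rewrite all_filter; apply: (sub_all _ bot2_pos) => x _; apply/implyP; lia.
  by rewrite all_filter; apply: (sub_all _ bot1_pos) => x _; apply/implyP; lia.
apply: sorted_geq_eq bot1_sorted bot2_sorted _.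
rewrite (permPl (perm_pad_ones bot1_pos)) (permPr (perm_pad_ones bot2_pos)).
have size12 : size bot1 = size bot2 by move: cut1 cut2; lia.
by rewrite -!size_filter (perm_size gt1_12) size12 perm_cat2r.
Qed.

Lemma perm_filter_lt_mex k mu : 0 < k -> all (fun x => 0 < x) mu -> mex mu = k ->
  exists2 c, all (fun x => 0 < x < k) c &
             perm_eq (filter (fun x => x < k) mu) (iota 1 k.-1 ++ c).
Proof.
move=> k_gt0 mu_pos mex_k; have [_ _ below] := mexP mu; rewrite mex_k in below.
have iota_sub : {subset iota 1 k.-1 <= filter (fun x => x < k) mu}.
  by move=> m; rewrite mem_iota mem_filter => m_bounds; rewrite below; lia.
have [c perm_c] := uniq_sub_perm_cat (iota_uniq 1 k.-1) iota_sub.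
exists c => //; apply/allP => x x_c.
have : x \in filter (fun x => x < k) mu by rewrite (perm_mem perm_c) mem_cat x_c orbT.
by rewrite mem_filter => /andP[x_lt /(allP mu_pos)]; lia.
Qed.

Lemma mex_parts_pad k D c m :
  all (fun x => 0 < x) D -> all (fun x => 0 < x) c ->
  perm_eq (mex_parts k (sort geq (map predn D)) (sort geq (map succn c ++ nseq m 1)))
          (D ++ iota 1 k.-1 ++ c).
Proof.
move=> D_pos c_pos.
have top_perm : perm_eq (map succn (sort geq (map predn D))) D.
  by rewrite -[X in perm_eq _ X](map_succn_predn D_pos); apply: perm_map; rewrite perm_sort.
have bot_perm : perm_eq (map predn (filter (fun x => 1 < x)
                                   (sort geq (map succn c ++ nseq m 1)))) c.
  rewrite -[X in perm_eq _ X](mapK succnK c); apply: perm_map.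
  rewrite (permPl (perm_filter _ (permEl (perm_sort _ _)))) filter_cat filter_nseq cats0.
  by rewrite (all_filterP _) // all_map; apply: (sub_all _ c_pos).
exact: perm_cat top_perm (perm_cat (perm_refl _) bot_perm).
Qed.

Lemma mex_partition_onto h k mu : 0 < k ->
  sorted geq mu -> all (fun x => 0 < x) mu -> mex_balanced h k mu ->
  exists top bot, [/\ hook_shaped k top bot, hfixed_cut h k top bot
                    & mex_partition k top bot = mu].
Proof.
move=> k_gt0 mu_sorted mu_pos /andP[/eqP mex_k balanced].
have [_ kNmu _] := mexP mu; rewrite mex_k in kNmu.
have [c c_bounds perm_c] := perm_filter_lt_mex k_gt0 mu_pos mex_k.
set D := filter (fun x => k < x) mu.
have D_gt : all (fun x => k < x) D := filter_all _ _.
have D_pos : all (fun x => 0 < x) D by apply: (sub_all _ D_gt) => x /=; lia.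
have c_pos : all (fun x => 0 < x) c by apply: (sub_all _ c_bounds) => x /andP[].
move: balanced; rewrite /nsmaller /nlarger -!size_filter (perm_size perm_c) size_cat size_iota.
rewrite -/D => balanced.
have {}balanced : (Posz (k.-1 + size c) < h + 1 + Posz (size D))%R := balanced.
set L := `|(Posz (size D).+1 + h - Posz k)%R|%N.
have L_eq : Posz L = (Posz (size D).+1 + h - Posz k)%R by rewrite /L; lia.
exists (sort geq (map predn D)), (sort geq (map succn c ++ nseq (L - size c) 1)); split.
- rewrite /hook_shaped !sort_sorted ?all_sort ?all_cat ?all_map ?all_nseq /= ?k_gt0;
    try exact: geq_total.
  rewrite !orbT !andbT; apply/and3P; split.
  + by apply: (sub_all _ D_gt) => x /=; lia.
  + by apply: (sub_all _ c_bounds) => x /=; lia.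
  + by apply/allP.
- by rewrite /hfixed_cut !size_sort size_cat !size_map size_nseq; apply/eqP; lia.
apply: sorted_geq_eq (sort_sorted geq_total _) mu_sorted _.
rewrite (permPl (perm_mex_partition _ _ _)) (permPr (perm_filter_gt_lt kNmu)).
by rewrite (permPl (mex_parts_pad _ _ D_pos c_pos)) perm_cat2l perm_sym.
Qed.

Definition hook_to_mex (h : int) (k : nat) (l : seq nat) : seq nat :=
  mex_partition k (hook_cut h k l).1 (hook_cut h k l).2.

Lemma hook_to_mex_spec h k n l : 0 < k -> is_partition n l -> has_hfixed_hook h k l ->
  let mu := hook_to_mex h k l in
  [/\ is_partition (sumn mu) mu, mex_balanced h k mu
    & Posz (sumn mu) = (Posz n + Posz 'C(k, 2) - (h + 1))%R].
Proof.
move=> k_gt0 l_part l_hook.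
have [top [bot [l_eq shaped cut sum_n]]] := hook_partitionP k_gt0 l_part l_hook.
rewrite /hook_to_mex l_eq hook_cut_cat //=; split.
- by rewrite /is_partition (sort_sorted geq_total) all_pos_mex_partition eqxx.
- exact: mex_balanced_mex_partition.
have bot_pos : all (fun x => 0 < x) bot by case/and5P: shaped.
by rewrite (sumn_mex_partition_cut bot_pos cut) sumn_cat /= -sum_n addnA.
Qed.

Lemma hook_to_mex_inj h k n1 n2 l1 l2 : 0 < k ->
  is_partition n1 l1 -> has_hfixed_hook h k l1 ->
  is_partition n2 l2 -> has_hfixed_hook h k l2 ->
  hook_to_mex h k l1 = hook_to_mex h k l2 -> l1 = l2.
Proof.
move=> k_gt0 l1_part l1_hook l2_part l2_hook.
have [top1 [bot1 [-> shaped1 cut1 _]]] := hook_partitionP k_gt0 l1_part l1_hook.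
have [top2 [bot2 [-> shaped2 cut2 _]]] := hook_partitionP k_gt0 l2_part l2_hook.
rewrite /hook_to_mex !hook_cut_cat //= => /(mex_partition_inj shaped1 shaped2 cut1 cut2).
by case=> -> ->.
Qed.

Lemma hook_to_mex_onto h k mu : 0 < k ->
  sorted geq mu -> all (fun x => 0 < x) mu -> mex_balanced h k mu ->
  exists l, [/\ is_partition (sumn l) l, has_hfixed_hook h k l & hook_to_mex h k l = mu].
Proof.
move=> k_gt0 mu_sorted mu_pos balanced.
have [top [bot [shaped cut <-]]] := mex_partition_onto k_gt0 mu_sorted mu_pos balanced.
exists (top ++ k :: bot); split.
- by rewrite is_partition_cat_mid // shaped sumn_cat /= addnA.
- by apply/hfixed_hookP; exists top, bot.
by rewrite /hook_to_mex hook_cut_cat.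
Qed.

Theorem theorem3p4 (h : int) (k n : nat) : (1 <= k)%N ->
  npart n (has_hfixed_hook h k) =
  npartZ (Posz n + Posz 'C(k, 2) - (h + 1))%R
    (fun mu => (mex mu == k) &&
               (Posz (nsmaller k mu) < h + 1 + Posz (nlarger k mu))%R).
Proof.
move=> k_gt0; rewrite /npartZ /npart -/(mex_balanced h k).
set N := (Posz n + _ - _)%R; case: ifP => [N_lt0 | N_ge0].
  apply/eqP; rewrite -leqn0 leqNgt -has_count; apply/hasPn => l.
  rewrite mem_partitions => l_part; apply/negP => /(hook_to_mex_spec k_gt0 l_part).
  by case=> _ _; lia.
apply: (@count_eq_bij _ _ _ _ _ _ (hook_to_mex h k) (uniq_partitions n) (uniq_partitions _)).
- move=> l1 l2; rewrite !inE !mem_partitions => /andP[l1_part l1_hook] /andP[l2_part l2_hook].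
  exact: hook_to_mex_inj k_gt0 l1_part l1_hook l2_part l2_hook.
- move=> l; rewrite mem_partitions => l_part /(hook_to_mex_spec k_gt0 l_part)[mu_part -> sum_N].
  by rewrite mem_partitions andbT (_ : `|N|%N = sumn (hook_to_mex h k l)) //; lia.
move=> mu; rewrite mem_partitions => /and3P[mu_sorted mu_pos /eqP mu_sum] balanced.
have [l [l_part l_hook l_mu]] := hook_to_mex_onto k_gt0 mu_sorted mu_pos balanced.
subst mu.
exists l => //; rewrite mem_partitions l_hook andbT (_ : n = sumn l) //.
by have [_ _] := hook_to_mex_spec k_gt0 l_part l_hook; lia.
Qed.
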